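(* The set $\mathcal{E}_2$ of all $2$-essential subsets of $\operatorname{codes}(\{0,1\})$ is finite.
   Context: A coronal code over $S$ of length $m$ is a formal string $x=c:p_0p_1\dots p_{m-1}$ with $c,p_i\in S$; $\operatorname{center}(x)=c$, $\operatorname{petals}(x)=\{p_0,\dots,p_{m-1}\}$; codes are identified up to rotation/reversal of the petal string, giving $\operatorname{codes}(S)$. For $a,b,c\in S$ (indeterminates), $c^a_b:=\arccos\!\Big(\frac{(c+a)^2+(c+b)^2-(a+b)^2}{2(c+a)(c+b)}\Big)$, and $\alpha(x):=\sum_{i=0}^{m-1} c^{p_i}_{p_{i+1\bmod m}}$. For $\rho\in(0,\infty)^S$, $\alpha(x)|_\rho$ is the value obtained by substituting $\rho(s)$ for each symbol $s$. For $S=\{0,\dots,n-1\}$, a nonempty $C\subseteq\operatorname{codes}(S)$ is fundamental if $\{\operatorname{center}(x):x\in C\}=\{0,\dots,n-2\}$ and for every nonempty $K\subseteq\{0,\dots,n-2\}$ there is $D\subseteq C$ with $\{\operatorname{center}(x):x\in D\}=K$ and $\big(\bigcup_{x\in D}\operatorname{petals}(x)\big)\setminus K\ne\emptyset$. $C$ is $n$-essential if it is fundamental and there exist nondecreasing maps $\rho,\sigma:S\to(0,\infty)$ with $\alpha(x)|_\rho\le2\pi\le\alpha(x)|_\sigma$ for all $x\in C$. *)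

From Stdlib Require Import Reals List Arith.
Import ListNotations.
Open Scope R_scope.

(* A raw coronal code  c : p_0 p_1 ... p_{m-1}  is a pair (c, [p_0;...;p_{m-1}]).
   Symbols are natural numbers; the alphabet S = {0,...,n-1}. *)
Definition rawcode : Type := (nat * list nat)%type.
Definition center (x : rawcode) : nat := fst x.
Definition petal_string (x : rawcode) : list nat := snd x.
Definition petals (x : rawcode) (p : nat) : Prop := In p (snd x).

Definition code_over (n : nat) (x : rawcode) : Prop :=
  (center x < n)%nat /\ Forall (fun p => (p < n)%nat) (petal_string x).

Definition rot (k : nat) (l : list nat) : list nat := skipn k l ++ firstn k l.

Definition code_equiv (x y : rawcode) : Prop :=
  center x = center y /\
  exists k, petal_string y = rot k (petal_string x)
         \/ petal_string y = rev (rot k (petal_string x)).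

(* A subset of codes(S) (a set of equivalence classes) is represented by the
   set of raw codes over S lying in one of its classes, i.e. a saturated set. *)
Definition codes_subset (n : nat) (C : rawcode -> Prop) : Prop :=
  (forall x, C x -> code_over n x) /\
  (forall x y, C x -> code_equiv x y -> C y).

Definition angle (c a b : R) : R :=
  acos (((c + a) ^ 2 + (c + b) ^ 2 - (a + b) ^ 2) / (2 * (c + a) * (c + b))).

Definition alpha (rho : nat -> R) (x : rawcode) : R :=
  let ps := petal_string x in
  let m := length ps in
  fold_right Rplus 0
    (map (fun i => angle (rho (center x)) (rho (nth i ps 0%nat))
                         (rho (nth ((i + 1) mod m) ps 0%nat)))
         (seq 0 m)).

Definition fundamental (n : nat) (C : rawcode -> Prop) : Prop :=
  (exists x, C x) /\
  (forall x, C x -> (center x <= n - 2)%nat) /\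
  (forall k, (k <= n - 2)%nat -> exists x, C x /\ center x = k) /\
  (forall K : nat -> Prop,
      (exists k, K k) -> (forall k, K k -> (k <= n - 2)%nat) ->
      exists D : rawcode -> Prop,
        codes_subset n D /\ (forall x, D x -> C x) /\
        (forall x, D x -> K (center x)) /\
        (forall k, K k -> exists x, D x /\ center x = k) /\
        (exists x p, D x /\ petals x p /\ ~ K p)).

Definition pos_nondecr (n : nat) (rho : nat -> R) : Prop :=
  (forall i, (i < n)%nat -> 0 < rho i) /\
  (forall i j, (i <= j)%nat -> (j < n)%nat -> rho i <= rho j).

Definition essential (n : nat) (C : rawcode -> Prop) : Prop :=
  codes_subset n C /\ fundamental n C /\
  exists rho sigma : nat -> R,
    pos_nondecr n rho /\ pos_nondecr n sigma /\
    (forall x, C x -> alpha rho x <= 2 * PI <= alpha sigma x).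

From Stdlib Require Import Reals List Arith Lra Lia Psatz Classical.
Import ListNotations.
Open Scope R_scope.

(* In a 2-essential family every code has center 0, the smaller symbol.  Since
   [rho] is nondecreasing, the central radius is then the smallest one in each
   triangle, so each of the [m] angles at the center is at least [PI/3]; the
   bound [alpha rho x <= 2 PI] forces [m <= 6].  Hence all codes lie in a fixed
   finite set of raw codes, which has only finitely many subsets. *)

Lemma PI3_le_acos x : x <= 1/2 -> PI/3 <= acos x.
Proof.
  intros Hx. pose proof PI_RGT_0.
  destruct (Rle_dec x (-1)) as [Hlow|Hlow].
  - unfold acos. destruct (Rle_dec x (-1)); [lra | contradiction].
  - destruct (Rle_lt_dec (PI/3) (acos x)) as [Hge|Hlt]; [exact Hge | exfalso].
    pose proof (acos_bound x) as [B1 B2].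
    assert (Hcos : cos (PI/3) < cos (acos x)) by (apply cos_decreasing_1; lra).
    rewrite cos_acos, cos_PI3 in Hcos by lra. lra.
Qed.

Lemma PI3_le_angle c a b : 0 < c -> c <= a -> c <= b -> PI/3 <= angle c a b.
Proof.
  intros Hc Ha Hb. unfold angle. apply PI3_le_acos.
  assert (HD : 0 < 2 * (c + a) * (c + b)) by nra.
  apply (Rmult_le_reg_r _ _ _ HD).
  unfold Rdiv. rewrite Rmult_assoc, Rinv_l, Rmult_1_r by lra.
  (* the cosine numerator is 2 (c^2 + c a + c b - a b), and [c^2 <= a b] etc. *)
  assert (c * c <= a * b) by nra. assert (c * a <= a * b) by nra.
  assert (c * b <= a * b) by nra.
  nra.
Qed.

Lemma sum_map_ge {A : Type} (m : R) (f : A -> R) (l : list A) :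
  (forall i, In i l -> m <= f i) ->
  INR (length l) * m <= fold_right Rplus 0 (map f l).
Proof.
  induction l as [|a l IH]; intros Hf; cbn [length map fold_right].
  - simpl; lra.
  - rewrite S_INR.
    assert (m <= f a) by (apply Hf; left; reflexivity).
    assert (INR (length l) * m <= fold_right Rplus 0 (map f l))
      by (apply IH; intros i Hi; apply Hf; right; exact Hi).
    lra.
Qed.

Lemma alpha_ge_petal_count (rho : nat -> R) (x : rawcode) :
  0 < rho (center x) ->
  (forall p, petals x p -> rho (center x) <= rho p) ->
  INR (length (petal_string x)) * (PI/3) <= alpha rho x.
Proof.
  intros Hpos Hmin. unfold alpha, petals, petal_string in *.
  set (ps := snd x) in *.
  rewrite <- (length_seq (length ps) 0) at 1.
  apply sum_map_ge. intros i Hi. apply in_seq in Hi.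
  assert (Hm : length ps <> 0%nat) by lia.
  apply PI3_le_angle; [exact Hpos | |]; apply Hmin, nth_In.
  - lia.
  - apply Nat.mod_upper_bound, Hm.
Qed.

Lemma petal_count_le_6 (rho : nat -> R) (x : rawcode) :
  0 < rho (center x) ->
  (forall p, petals x p -> rho (center x) <= rho p) ->
  alpha rho x <= 2 * PI ->
  (length (petal_string x) <= 6)%nat.
Proof.
  intros Hpos Hmin Hle.
  pose proof (alpha_ge_petal_count rho x Hpos Hmin) as Hge.
  destruct (le_lt_dec (length (petal_string x)) 6) as [Hm|Hm]; [exact Hm | exfalso].
  assert (INR 7 <= INR (length (petal_string x))) by (apply le_INR; lia).
  pose proof PI_RGT_0. simpl in *. nra.
Qed.

Fixpoint binary_words_upto (k : nat) : list (list nat) :=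
  match k with
  | O => [[]]
  | S k => [] :: map (cons 0%nat) (binary_words_upto k)
                ++ map (cons 1%nat) (binary_words_upto k)
  end.

Lemma in_binary_words_upto k l :
  (length l <= k)%nat -> Forall (fun p => (p < 2)%nat) l ->
  In l (binary_words_upto k).
Proof.
  revert l; induction k as [|k IH]; intros l Hl Hbin.
  - destruct l; simpl in *; [left; reflexivity | lia].
  - destruct l as [|p l]; simpl; [left; reflexivity | right].
    inversion Hbin; subst. simpl in Hl. apply in_or_app.
    destruct p as [|[|p]]; [left | right | lia];
      apply in_map, IH; auto; lia.
Qed.

Fixpoint subsets {T : Type} (U : list T) : list (T -> Prop) :=
  match U with
  | [] => [fun _ => False]
  | u :: U => subsets U ++ map (fun P x => x = u \/ P x) (subsets U)
  end.

Lemma subsets_complete {T : Type} (U : list T) (C : T -> Prop) :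
  (forall x, C x -> In x U) ->
  exists D, In D (subsets U) /\ (forall x, C x <-> D x).
Proof.
  revert C; induction U as [|u U IH]; intros C HC; simpl.
  - exists (fun _ => False). split; [left; reflexivity|].
    intros x; split; [intros Hx; exact (HC x Hx) | tauto].
  - destruct (IH (fun x => C x /\ x <> u)) as [P [HP HCP]].
    { intros x [Hx Hxu]. destruct (HC x Hx); [congruence | assumption]. }
    destruct (classic (C u)) as [Cu|Cu].
    + exists (fun x => x = u \/ P x). split.
      * apply in_or_app; right. apply in_map_iff. exists P; auto.
      * intros x; split.
        -- intros Hx. destruct (classic (x = u)); [left | right; apply HCP]; auto.
        -- intros [->|Hx]; [exact Cu | apply HCP in Hx; tauto].
    + exists P. split; [apply in_or_app; left; exact HP|].
      intros x; split.
      * intros Hx. apply HCP. split; [exact Hx | intros ->; contradiction].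
      * intros Hx. apply HCP in Hx. tauto.
Qed.

Lemma essential2_codes_bounded (C : rawcode -> Prop) (x : rawcode) :
  essential 2 C -> C x ->
  In x (map (pair 0%nat) (binary_words_upto 6)).
Proof.
  intros [[Hover _] [[_ [Hcen _]] [rho [sigma [[Hpos Hmon] [_ Halpha]]]]]] Hx.
  destruct x as [c ps].
  destruct (Hover _ Hx) as [_ Hbin]. simpl in Hbin.
  assert (c = 0%nat) by (pose proof (Hcen _ Hx); simpl in *; lia). subst c.
  apply in_map, in_binary_words_upto; [| exact Hbin].
  apply (petal_count_le_6 rho (0%nat, ps)); [apply Hpos; cbn; lia | | apply (Halpha _ Hx)].
  intros p Hp. apply Hmon; [cbn; lia |].
  rewrite Forall_forall in Hbin. exact (Hbin p Hp).
Qed.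

Theorem lemma6p5 :
  exists L : list (rawcode -> Prop),
    forall C : rawcode -> Prop, essential 2 C ->
      exists D, In D L /\ (forall x, C x <-> D x).
Proof.
  exists (subsets (map (pair 0%nat) (binary_words_upto 6))).
  intros C HC. apply subsets_complete.
  intros x Hx. exact (essential2_codes_bounded C x HC Hx).
Qed.
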